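(* Let $F\subseteq P_{3,4}$ be an exposed face defined by a linear functional $L:H_4\to\mathbb R$ that is nonnegative on $P_{3,4}$ with $F=\ker L\cap P_{3,4}$. Let $B_L:H_2\times H_2\to\mathbb R$, $B_L(f,g)=L(fg)$ (a positive semidefinite symmetric bilinear form), and $\ker B_L=\{f\in H_2: B_L(f,g)=0\ \forall g\in H_2\}$. Then $\ker B_L=J_F$.
   Context: $H_k\subseteq\mathbb R[x,y,z]$: real ternary forms of degree $k$; $P_{3,4}=\{f\in H_4: f\ge0\text{ on }\mathbb P^2(\mathbb R)\}$. A face of $P_{3,4}$ is a convex subcone $F$ such that $a,b\in P_{3,4}$, $a+b\in F$ imply $a,b\in F$; it is exposed if $F=\ker L\cap P_{3,4}$ for a linear functional $L$ nonnegative on $P_{3,4}$. $J_F=\{q\in H_2: q^2\in F\}$. *)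

(* real ternary forms represented as polynomial functions R^3 -> R. *)
From Stdlib Require Import Reals.
Open Scope R_scope.

Definition tfun := R -> R -> R -> R.

Definition is_form (k : nat) (f : tfun) : Prop :=
  exists c : nat -> nat -> R, forall x y z : R,
    f x y z = sum_f_R0 (fun i =>
                sum_f_R0 (fun j => c i j * x ^ i * y ^ j * z ^ (k - i - j))
                         (k - i)) k.

Definition fmul (f g : tfun) : tfun := fun x y z => f x y z * g x y z.
Definition fadd (f g : tfun) : tfun := fun x y z => f x y z + g x y z.
Definition fscal (a : R) (f : tfun) : tfun := fun x y z => a * f x y z.

(* P_{3,4}: quartic forms nonnegative on R^3 (equivalently on P^2(R)). *)
Definition P34 (f : tfun) : Prop :=
  is_form 4 f /\ forall x y z : R, 0 <= f x y z.

(* L is a linear functional on H_4 (only its values on H_4 matter). *)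
Definition linear_on_H4 (L : tfun -> R) : Prop :=
  (forall f g, is_form 4 f -> is_form 4 g -> L (fadd f g) = L f + L g) /\
  (forall a f, is_form 4 f -> L (fscal a f) = a * L f).

Definition J (F : tfun -> Prop) (q : tfun) : Prop :=
  is_form 2 q /\ F (fmul q q).

Definition B (L : tfun -> R) (f g : tfun) : R := L (fmul f g).
Definition kerB (L : tfun -> R) (f : tfun) : Prop :=
  is_form 2 f /\ forall g, is_form 2 g -> B L f g = 0.

From Stdlib Require Import Reals Lra Psatz.
Open Scope R_scope.

(* One inclusion is immediate: if q is in ker B_L then q^2 is a nonnegative
   quartic with L(q^2) = B_L(q,q) = 0, so q^2 lies in F.
   For the other, let q^2 lie in F and g be a quadratic form.  For every real t
   the quartic (q + t g)^2 = q^2 + 2t qg + t^2 g^2 is nonnegative, so by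
   linearity 0 <= L(q^2) + 2t L(qg) + t^2 L(g^2) = 2t L(qg) + t^2 L(g^2).  A
   quadratic polynomial in t without constant term is nonnegative only if its
   linear coefficient vanishes, hence B_L(q,g) = L(qg) = 0. *)

Lemma form_add (k : nat) (f g : tfun) :
  is_form k f -> is_form k g -> is_form k (fadd f g).
Proof.
  intros [a Ha] [b Hb]. exists (fun i j => a i j + b i j).
  intros x y z. unfold fadd. rewrite Ha, Hb, <- sum_plus.
  apply sum_eq. intros i _. rewrite <- sum_plus.
  apply sum_eq. intros j _. ring.
Qed.

Lemma form_scal (k : nat) (s : R) (f : tfun) :
  is_form k f -> is_form k (fscal s f).
Proof.
  intros [a Ha]. exists (fun i j => s * a i j).
  intros x y z. unfold fscal. rewrite Ha, scal_sum.
  apply sum_eq. intros i _. rewrite Rmult_comm, scal_sum.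
  apply sum_eq. intros j _. ring.
Qed.

(* Coefficients of a quadratic form, with the meaningless ones (i + j > 2)
   set to zero. *)
Definition quad_coef (a : nat -> nat -> R) (i j : nat) : R :=
  if Nat.leb (i + j) 2 then a i j else 0.

Definition conv_coef (a b : nat -> nat -> R) (i j : nat) : R :=
  sum_f_R0 (fun i1 => sum_f_R0 (fun j1 =>
    quad_coef a i1 j1 * quad_coef b (i - i1) (j - j1)) j) i.

Lemma form_mul (f g : tfun) :
  is_form 2 f -> is_form 2 g -> is_form 4 (fmul f g).
Proof.
  intros [a Ha] [b Hb]. exists (conv_coef a b).
  intros x y z. unfold fmul. rewrite Ha, Hb.
  unfold conv_coef, quad_coef. simpl. ring.
Qed.

Lemma square_P34 (g : tfun) : is_form 2 g -> P34 (fmul g g).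
Proof.
  intros Hg. split.
  - now apply form_mul.
  - intros x y z. apply Rle_0_sqr.
Qed.

Lemma nonneg_quadratic_linear_coef (b c : R) :
  (forall t, 0 <= 2 * t * b + t ^ 2 * c) -> b = 0.
Proof.
  intros Hnonneg. destruct (Req_dec b 0) as [|Hb]; [assumption | exfalso].
  set (s := / (Rabs c + 1)).
  assert (Hc : 0 <= Rabs c) by apply Rabs_pos.
  assert (Hs : s * (Rabs c + 1) = 1) by (unfold s; field; lra).
  assert (Hs_pos : 0 < s) by (unfold s; apply Rinv_0_lt_compat; lra).
  assert (Hsc : s * c < 1).
  { pose proof (Rle_abs c). nra. }
  assert (Hbb : 0 < b * b) by nra.
  specialize (Hnonneg (- b * s)).
  replace (2 * (- b * s) * b + (- b * s) ^ 2 * c)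
    with ((b * b) * s * (s * c - 2)) in Hnonneg by ring.
  assert (0 < (b * b) * s) by nra. nra.
Qed.

(* (q + t g)^2, written as the expanded combination of q^2, qg and g^2 to
   which the linearity of L applies. *)
Definition square_pencil (q g : tfun) (t : R) : tfun :=
  fadd (fadd (fmul q q) (fscal (2 * t) (fmul q g))) (fscal (t ^ 2) (fmul g g)).

Lemma square_pencil_P34 (q g : tfun) (t : R) :
  is_form 2 q -> is_form 2 g -> P34 (square_pencil q g t).
Proof.
  intros Hq Hg. unfold square_pencil. split.
  - apply form_add; [apply form_add |]; auto using form_mul, form_scal.
  - intros x y z. unfold fadd, fscal, fmul.
    replace (q x y z * q x y z + 2 * t * (q x y z * g x y z)
             + t ^ 2 * (g x y z * g x y z))
      with ((q x y z + t * g x y z) * (q x y z + t * g x y z)) by ring.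
    apply Rle_0_sqr.
Qed.

Section MomentForm.

Variable L : tfun -> R.
Hypothesis HL : linear_on_H4 L.

Lemma L_square_pencil (q g : tfun) (t : R) :
  is_form 2 q -> is_form 2 g ->
  L (square_pencil q g t) = B L q q + 2 * t * B L q g + t ^ 2 * B L g g.
Proof.
  intros Hq Hg. destruct HL as [Hadd Hscal]. unfold square_pencil, B.
  rewrite Hadd, Hadd, Hscal, Hscal;
    auto using form_add, form_scal, form_mul.
Qed.

Hypothesis Hnn : forall f, P34 f -> 0 <= L f.

Lemma isotropic_in_kernel (q g : tfun) :
  is_form 2 q -> is_form 2 g -> B L q q = 0 -> B L q g = 0.
Proof.
  intros Hq Hg Hqq. apply (nonneg_quadratic_linear_coef _ (B L g g)).
  intros t. pose proof (Hnn _ (square_pencil_P34 q g t Hq Hg)) as Hpos.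
  rewrite L_square_pencil, Hqq in Hpos by assumption. lra.
Qed.

End MomentForm.

Theorem mainTheorem16 (L : tfun -> R) (F : tfun -> Prop)
  (HL : linear_on_H4 L)
  (Hnn : forall f, P34 f -> 0 <= L f)
  (HF : forall f, F f <-> (P34 f /\ L f = 0)) :
  forall q : tfun, kerB L q <-> J F q.
Proof.
  intros q. unfold kerB, J. rewrite HF. split.
  - intros [Hq Hker]. split; [| split].
    + assumption.
    + now apply square_P34.
    + exact (Hker q Hq).
  - intros [Hq [_ Hqq]]. split; [assumption |].
    intros g Hg. now apply (isotropic_in_kernel L HL Hnn).
Qed.
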